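(* Let $X$ be a real Hilbert space, let $A,B\colon X\rightrightarrows X$, let $\mu>\omega\ge0$, and let $\gamma\in\left]0,\frac{\mu-\omega}{2\mu\omega}\right[$ (with $\gamma\in\left]0,+\infty\right[$ when $\omega=0$). Suppose that either (a) $A$ is maximally $(-\omega)$-monotone and $B$ is maximally $\mu$-monotone, or (b) $A$ is maximally $\mu$-monotone and $B$ is maximally $(-\omega)$-monotone. Set $$T=\tfrac12\big(\mathrm{Id}+R_{\gamma B}R_{\gamma A}\big),\qquad\alpha=\frac{\mu-\omega}{2(\mu-\omega-\gamma\mu\omega)}.$$ Then $T$ is single-valued with full domain, $\alpha\in\left]0,1\right[$, and $T$ is $\alpha$-averaged.
   Context: For $\rho\in\mathbb{R}$, $A\colon X\rightrightarrows X$ is $\rho$-monotone if $\langle x-y,u-v\rangle\ge\rho\|x-y\|^2$ for all $(x,u),(y,v)\in\operatorname{gra}A$, and maximally $\rho$-monotone if no proper extension of its graph is $\rho$-monotone. $J_A=(\mathrm{Id}+A)^{-1}$, $R_A=2J_A-\mathrm{Id}$. For $\alpha\in\left]0,1\right[$, $T$ is $\alpha$-averaged if $T=(1-\alpha)\mathrm{Id}+\alpha N$ for some nonexpansive ($1$-Lipschitz) $N\colon X\to X$. *)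

From Stdlib Require Import Reals Lra.
Open Scope R_scope.

Record HilbertSpace : Type := {
  hcar :> Type;
  hadd : hcar -> hcar -> hcar;
  hzero : hcar;
  hopp : hcar -> hcar;
  hscal : R -> hcar -> hcar;
  hinner : hcar -> hcar -> R;
  hadd_assoc : forall x y z, hadd x (hadd y z) = hadd (hadd x y) z;
  hadd_comm : forall x y, hadd x y = hadd y x;
  hadd_zero : forall x, hadd x hzero = x;
  hadd_opp : forall x, hadd x (hopp x) = hzero;
  hscal_assoc : forall a b x, hscal a (hscal b x) = hscal (a * b) x;
  hscal_one : forall x, hscal 1 x = x;
  hscal_distr_v : forall a x y, hscal a (hadd x y) = hadd (hscal a x) (hscal a y);
  hscal_distr_s : forall a b x, hscal (a + b) x = hadd (hscal a x) (hscal b x);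
  hinner_sym : forall x y, hinner x y = hinner y x;
  hinner_add_l : forall x y z, hinner (hadd x y) z = hinner x z + hinner y z;
  hinner_scal_l : forall a x y, hinner (hscal a x) y = a * hinner x y;
  hinner_pos : forall x, 0 <= hinner x x;
  hinner_def : forall x, hinner x x = 0 -> x = hzero;
  hcomplete : forall u : nat -> hcar,
    (forall eps, 0 < eps -> exists N, forall n m, (N <= n)%nat -> (N <= m)%nat ->
        sqrt (hinner (hadd (u n) (hopp (u m))) (hadd (u n) (hopp (u m)))) < eps) ->
    exists l, forall eps, 0 < eps -> exists N, forall n, (N <= n)%nat ->
        sqrt (hinner (hadd (u n) (hopp l)) (hadd (u n) (hopp l))) < eps
}.

Arguments hadd {h}. Arguments hzero {h}. Arguments hopp {h}.
Arguments hscal {h}. Arguments hinner {h}.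

Definition hsub {X : HilbertSpace} (x y : X) : X := hadd x (hopp y).
Definition hnorm {X : HilbertSpace} (x : X) : R := sqrt (hinner x x).

(* set-valued operator X ⇉ X, represented by its graph *)
Definition setop (X : HilbertSpace) := X -> X -> Prop.

Definition rho_monotone {X : HilbertSpace} (rho : R) (A : setop X) : Prop :=
  forall x u y v, A x u -> A y v ->
    hinner (hsub x y) (hsub u v) >= rho * (hnorm (hsub x y))^2.

Definition max_rho_monotone {X : HilbertSpace} (rho : R) (A : setop X) : Prop :=
  rho_monotone rho A /\
  forall B : setop X, rho_monotone rho B -> (forall x u, A x u -> B x u) ->
    forall x u, B x u -> A x u.

Definition op_scale {X : HilbertSpace} (g : R) (A : setop X) : setop X :=
  fun x w => exists u, A x u /\ w = hscal g u.

(* resolvent J_A = (Id + A)^{-1}: y ∈ J_A x iff x ∈ y + A y *)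
Definition resolvent {X : HilbertSpace} (A : setop X) : setop X :=
  fun x y => exists u, A y u /\ x = hadd y u.

Definition reflected {X : HilbertSpace} (A : setop X) : setop X :=
  fun x z => exists y, resolvent A x y /\ z = hsub (hscal 2 y) x.

Definition op_comp {X : HilbertSpace} (B A : setop X) : setop X :=
  fun x z => exists y, A x y /\ B y z.

Definition DR_op {X : HilbertSpace} (g : R) (A B : setop X) : setop X :=
  fun x w => exists z, op_comp (reflected (op_scale g B)) (reflected (op_scale g A)) x z
                    /\ w = hscal (1/2) (hadd x z).

Definition nonexpansive {X : HilbertSpace} (N : X -> X) : Prop :=
  forall x y, hnorm (hsub (N x) (N y)) <= hnorm (hsub x y).

Definition averaged {X : HilbertSpace} (alpha : R) (T : setop X) : Prop :=
  0 < alpha < 1 /\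
  exists N : X -> X, nonexpansive N /\
    forall x w, T x w <-> w = hadd (hscal (1 - alpha) x) (hscal alpha (N x)).

From Stdlib Require Import Reals Lra Lia Classical ClassicalEpsilon.
Open Scope R_scope.

(* For a maximally rho-monotone operator M and 1 + g rho > 0, the map Id + g M
   is injective, and it is surjective by Minty's theorem, proved here by
   minimizing the strongly convex function F(x, u) + (|x|^2 + |u|^2)/2, with F
   the Fitzpatrick function of an affinely rescaled monotone graph.
   Writing x_i = p_i + g a_i with a_i in A p_i, and 2 p_i - x_i = q_i + g b_i
   with b_i in B q_i, one has (Id - T) x_i = p_i - q_i, and the two
   monotonicity inequalities add up to
     <x_1 - x_2, P - Q> >= |P - Q|^2 + g rA |P|^2 + g rB |Q|^2
   for P = p_1 - p_2 and Q = q_1 - q_2.  Completing a square bounds the last two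
   terms below by (g rA rB / (rA + rB)) |P - Q|^2, so Id - T is c-cocoercive
   with c = 1 + g rA rB / (rA + rB), which says exactly that T is
   1/(2c)-averaged.  For {rA, rB} = {-omega, mu} one finds 1/(2c) = alpha. *)

Section InnerProduct.
Context {X : HilbertSpace}.

Lemma hinner_zero_l (z : X) : hinner hzero z = 0.
Proof.
  assert (H := hinner_add_l _ hzero hzero z). rewrite hadd_zero in H. lra.
Qed.

Lemma hinner_opp_l (x z : X) : hinner (hopp x) z = - hinner x z.
Proof.
  assert (H := hinner_add_l _ x (hopp x) z). rewrite hadd_opp, hinner_zero_l in H. lra.
Qed.

Lemma hinner_add_r (x y z : X) : hinner z (hadd x y) = hinner z x + hinner z y.
Proof. rewrite !(hinner_sym _ z). apply hinner_add_l. Qed.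

Lemma hinner_scal_r (a : R) (x z : X) : hinner z (hscal a x) = a * hinner z x.
Proof. rewrite !(hinner_sym _ z). apply hinner_scal_l. Qed.

Lemma hinner_opp_r (x z : X) : hinner z (hopp x) = - hinner z x.
Proof. rewrite !(hinner_sym _ z). apply hinner_opp_l. Qed.

Lemma hinner_zero_r (z : X) : hinner z hzero = 0.
Proof. rewrite hinner_sym. apply hinner_zero_l. Qed.

Lemma hvec_ext (v w : X) : (forall z, hinner v z = hinner w z) -> v = w.
Proof.
  intro H. assert (E : hinner (hadd v (hopp w)) (hadd v (hopp w)) = 0).
  { rewrite hinner_add_l, hinner_opp_l, H. ring. }
  apply hinner_def in E.
  rewrite <- (hadd_zero _ w), <- E, (hadd_comm _ v), hadd_assoc, hadd_opp, hadd_comm, hadd_zero.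
  reflexivity.
Qed.

Lemma hnorm_sq (z : X) : hnorm z ^ 2 = hinner z z.
Proof. unfold hnorm. rewrite pow2_sqrt; auto using hinner_pos. Qed.

End InnerProduct.

#[export] Hint Rewrite @hinner_add_l @hinner_add_r @hinner_scal_l @hinner_scal_r
  @hinner_opp_l @hinner_opp_r @hinner_zero_l @hinner_zero_r : hinner_lin.

Ltac hexpand := unfold hsub in *; autorewrite with hinner_lin in *.
Ltac vext := apply hvec_ext; let z := fresh "z" in intro z; unfold hsub; autorewrite with hinner_lin.

Lemma eq_of_dist_sq0 {X : HilbertSpace} (a b : X) : hinner (hsub a b) (hsub a b) = 0 -> a = b.
Proof.
  intro H. apply hinner_def in H.
  assert (E : a = hadd (hsub a b) b) by (vext; ring).
  rewrite H, hadd_comm, hadd_zero in E. exact E.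
Qed.

Lemma inner_lt_of_sq_small {X : HilbertSpace} (z : X) (delta : R) : 0 < delta ->
  exists eta, 0 < eta /\ forall h : X, hinner h h < eta -> hinner h z < delta.
Proof.
  intro Hd. assert (Hz := hinner_pos _ z).
  set (t := (hinner z z + 1) / delta).
  assert (Ht : 0 < t) by (apply Rdiv_lt_0_compat; lra).
  assert (Htd : t * delta = hinner z z + 1) by (unfold t; field; lra).
  exists (delta / t). split; [apply Rdiv_lt_0_compat; lra|]. intros h Hh.
  (* 2 t <h, z> <= t^2 |h|^2 + |z|^2 < 2 t delta *)
  assert (Hsq := hinner_pos _ (hsub (hscal t h) z)).
  hexpand. rewrite (hinner_sym _ z h) in Hsq.
  assert (Hth : t * hinner h h < delta).
  { apply Rmult_lt_compat_l with (r := t) in Hh; [|lra].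
    replace (t * (delta / t)) with delta in Hh by (field; lra). exact Hh. }
  apply Rmult_lt_reg_l with t; [lra|]. nra.
Qed.

Definition sq_conv {X : HilbertSpace} (u : nat -> X) (l : X) : Prop :=
  forall eps, 0 < eps -> exists N, forall n, (N <= n)%nat -> hinner (hsub (u n) l) (hsub (u n) l) < eps.

Lemma hcomplete_sq {X : HilbertSpace} (u : nat -> X) :
  (forall eps, 0 < eps -> exists N, forall n m, (N <= n)%nat -> (N <= m)%nat ->
     hinner (hsub (u n) (u m)) (hsub (u n) (u m)) < eps) ->
  exists l, sq_conv u l.
Proof.
  intro Hc. destruct (hcomplete X u) as [l Hl].
  - intros eps He. destruct (Hc (eps * eps)) as [N HN]; [nra|].
    exists N. intros n m Hn Hm. rewrite <- (sqrt_square eps) by lra.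
    apply sqrt_lt_1_alt. split; [apply hinner_pos | apply HN; auto].
  - exists l. intros eps He. destruct (Hl (sqrt eps)) as [N HN]; [apply sqrt_lt_R0; auto|].
    exists N. intros n Hn. apply sqrt_lt_0_alt. apply HN; auto.
Qed.

Lemma inv_INR_succ_lt (eps : R) : 0 < eps -> exists N : nat, forall n, (N <= n)%nat -> / (INR n + 1) < eps.
Proof.
  intro He. destruct (archimed_cor1 eps He) as [N [HN HN0]]. exists N. intros n Hn.
  apply Rle_lt_trans with (/ INR N); auto.
  apply Rinv_le_contravar; [apply lt_0_INR; lia|]. apply le_INR in Hn. lra.
Qed.

Section Minty.
Context {X : HilbertSpace} (N : setop X).
Hypothesis N_mono : forall x u y v, N x u -> N y v -> 0 <= hinner (hsub x y) (hsub u v).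
Hypothesis N_max : forall a b, (forall y v, N y v -> 0 <= hinner (hsub a y) (hsub b v)) -> N a b.

(* [fitz_le x u c] says F(x, u) + |x|^2/2 + |u|^2/2 <= c, where
   F(x, u) = sup_{(y, v) in N} <x, v> + <y, u> - <y, v> is the Fitzpatrick function of N. *)
Definition fitz_le (x u : X) (c : R) : Prop :=
  forall y v, N y v -> hinner x v + hinner y u - hinner y v + /2 * hinner x x + /2 * hinner u u <= c.

Lemma fitz_le_weaken x u c c' : fitz_le x u c -> c <= c' -> fitz_le x u c'.
Proof. intros H Hc y v Hy. specialize (H y v Hy). lra. Qed.

Lemma fitz_le_lb x u c : fitz_le x u c -> /2 * hinner (hadd x u) (hadd x u) <= c.
Proof.
  intro H. apply Rnot_lt_le; intro Hlt.
  assert (Nxu : N x u).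
  { apply N_max. intros y v Hyv. specialize (H y v Hyv). hexpand.
    rewrite (hinner_sym _ u x) in *. lra. }
  specialize (H x u Nxu). hexpand. rewrite (hinner_sym _ u x) in *. lra.
Qed.

Lemma fitz_le_midpoint x1 u1 x2 u2 c1 c2 :
  fitz_le x1 u1 c1 -> fitz_le x2 u2 c2 ->
  fitz_le (hscal (/2) (hadd x1 x2)) (hscal (/2) (hadd u1 u2))
     ((c1 + c2) / 2 - /8 * (hinner (hsub x1 x2) (hsub x1 x2) + hinner (hsub u1 u2) (hsub u1 u2))).
Proof.
  intros H1 H2 y v Hyv. specialize (H1 y v Hyv). specialize (H2 y v Hyv). hexpand. lra.
Qed.

Lemma graph_inhabited : exists y v, N y v.
Proof.
  apply NNPP; intro Hn. apply Hn. exists hzero, hzero.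
  apply N_max. intros y v Hyv. exfalso. eauto.
Qed.

Lemma fitz_inf_exists : exists m, (forall x u c, fitz_le x u c -> m <= c) /\
  forall eps, 0 < eps -> exists x u, fitz_le x u (m + eps).
Proof.
  set (E := fun c => exists x u, fitz_le x u (- c)).
  destruct graph_inhabited as [y0 [v0 H0]].
  destruct (completeness E) as [M [HM1 HM2]].
  - exists 0. intros c [x [u Hc]]. apply fitz_le_lb in Hc.
    generalize (hinner_pos _ (hadd x u)). lra.
  - exists (- (hinner y0 v0 + /2 * hinner y0 y0 + /2 * hinner v0 v0)). exists y0, v0.
    rewrite Ropp_involutive. intros y v Hyv. generalize (N_mono _ _ _ _ H0 Hyv). hexpand. lra.
  - exists (- M). split.
    + intros x u c Hc. enough (- c <= M) by lra. apply HM1. exists x, u.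
      rewrite Ropp_involutive. exact Hc.
    + intros eps He. apply NNPP; intro Hn. enough (M <= M - eps) by lra.
      apply HM2. intros c [x [u Hc]]. apply Rnot_lt_le; intro Hlt.
      apply Hn. exists x, u. apply fitz_le_weaken with (- c); [exact Hc | lra].
Qed.

Lemma fitz_le_limit xs us x u m : sq_conv xs x -> sq_conv us u ->
  (forall n, fitz_le (xs n) (us n) (m + / (INR n + 1))) -> fitz_le x u m.
Proof.
  intros Hx Hu Hs y v Hyv. apply Rle_plus_epsilon. intros delta Hd.
  destruct (inner_lt_of_sq_small (hopp (hadd v x)) (delta / 3)) as [e1 [He1 H1]]; [lra|].
  destruct (inner_lt_of_sq_small (hopp (hadd y u)) (delta / 3)) as [e2 [He2 H2]]; [lra|].
  destruct (Hx e1 He1) as [N1 HN1]. destruct (Hu e2 He2) as [N2 HN2].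
  destruct (inv_INR_succ_lt (delta / 3)) as [N3 HN3]; [lra|].
  set (n := (N1 + N2 + N3)%nat).
  assert (B1 := H1 _ (HN1 n ltac:(lia))). assert (B2 := H2 _ (HN2 n ltac:(lia))).
  assert (B3 := HN3 n ltac:(lia)). assert (B4 := Hs n y v Hyv).
  assert (Q1 := hinner_pos _ (hsub (xs n) x)). assert (Q2 := hinner_pos _ (hsub (us n) u)).
  hexpand.
  rewrite ?(hinner_sym _ x (xs n)), ?(hinner_sym _ u (us n)), ?(hinner_sym _ (us n) y),
    ?(hinner_sym _ u y) in *.
  lra.
Qed.

Lemma fitz_min_attained : exists x u m, (forall x' u' c, fitz_le x' u' c -> m <= c) /\ fitz_le x u m.
Proof.
  destruct fitz_inf_exists as [m [Hlow Happ]].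
  destruct (choice (fun (n : nat) (p : X * X) => fitz_le (fst p) (snd p) (m + / (INR n + 1))))
    as [s Hs].
  { intro n. destruct (Happ (/ (INR n + 1))) as [x [u H]].
    - apply Rinv_0_lt_compat. generalize (pos_INR n). lra.
    - exists (x, u). exact H. }
  (* a minimizing sequence is Cauchy by strong convexity *)
  assert (Hcau : forall n k,
    hinner (hsub (fst (s n)) (fst (s k))) (hsub (fst (s n)) (fst (s k)))
    + hinner (hsub (snd (s n)) (snd (s k))) (hsub (snd (s n)) (snd (s k)))
    <= 4 * (/ (INR n + 1) + / (INR k + 1))).
  { intros n k. generalize (Hlow _ _ _ (fitz_le_midpoint _ _ _ _ _ _ (Hs n) (Hs k))). lra. }
  assert (Hconv : forall w : nat -> X,
    (forall n k, hinner (hsub (w n) (w k)) (hsub (w n) (w k)) <= 4 * (/ (INR n + 1) + / (INR k + 1))) ->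
    exists l, sq_conv w l).
  { intros w Hw. apply hcomplete_sq. intros eps He.
    destruct (inv_INR_succ_lt (eps / 8)) as [N0 HN0]; [lra|].
    exists N0. intros n k Hn Hk. generalize (Hw n k) (HN0 n Hn) (HN0 k Hk). lra. }
  destruct (Hconv (fun n => fst (s n))) as [x Hx].
  { intros n k. generalize (Hcau n k) (hinner_pos _ (hsub (snd (s n)) (snd (s k)))). lra. }
  destruct (Hconv (fun n => snd (s n))) as [u Hu].
  { intros n k. generalize (Hcau n k) (hinner_pos _ (hsub (fst (s n)) (fst (s k)))). lra. }
  exists x, u, m. split; [exact Hlow|]. exact (fitz_le_limit _ _ x u m Hx Hu Hs).
Qed.

Lemma fitz_min_variational x u m : (forall x' u' c, fitz_le x' u' c -> m <= c) -> fitz_le x u m ->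
  forall y v, N y v -> m <= hinner y v + hinner y x + hinner v u - /2 * hinner x x - /2 * hinner u u.
Proof.
  intros Hlow Hxu y v Hyv.
  set (D := hinner (hsub y x) (hsub y x) + hinner (hsub v u) (hsub v u)).
  set (G := hinner y v + /2 * hinner y y + /2 * hinner v v).
  assert (HD : 0 <= D) by (generalize (hinner_pos _ (hsub y x)) (hinner_pos _ (hsub v u)); unfold D; lra).
  (* compare with the point (1 - t) (x, u) + t (y, v) and let t go to 0 *)
  assert (Ht : forall t, 0 < t < 1 -> m <= G - /2 * D + /2 * t * D).
  { intros t Ht.
    assert (Hc : fitz_le (hadd (hscal (1 - t) x) (hscal t y)) (hadd (hscal (1 - t) u) (hscal t v))
       ((1 - t) * m + t * G - /2 * t * (1 - t) * D)).
    { intros y' v' H'. assert (S1 := Hxu y' v' H'). assert (Mo := N_mono _ _ _ _ Hyv H').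
      assert (A1 := Rmult_le_compat_l (1 - t) _ _ ltac:(lra) S1).
      assert (A2 : 0 <= t * hinner (hsub y y') (hsub v v')) by (apply Rmult_le_pos; lra).
      unfold D, G. hexpand. lra. }
    apply Hlow in Hc. apply Rmult_le_reg_l with t; [lra|]. lra. }
  assert (Hopt : m <= G - /2 * D).
  { apply Rle_plus_epsilon. intros eps He.
    set (t := eps / (eps + D + 1)).
    assert (Et : t * eps + t * D + t = eps) by (unfold t; field; lra).
    assert (Ht0 : 0 < t) by (apply Rdiv_lt_0_compat; lra).
    assert (0 <= t * eps) by (apply Rmult_le_pos; lra).
    assert (0 <= t * D) by (apply Rmult_le_pos; lra).
    assert (Ht1 := Ht t ltac:(split; nra)). lra. }
  unfold G, D in Hopt. hexpand. rewrite (hinner_sym _ x y), (hinner_sym _ u v) in Hopt. lra.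
Qed.

Theorem minty_zero : exists y, N y (hopp y).
Proof.
  destruct fitz_min_attained as [x [u [m [Hlow Hxu]]]].
  assert (Hlb := fitz_le_lb _ _ _ Hxu).
  assert (Hopt := fitz_min_variational _ _ _ Hlow Hxu).
  assert (Hrel : N (hopp u) (hopp x)).
  { apply N_max. intros y v Hyv. specialize (Hopt y v Hyv).
    generalize (hinner_pos _ (hadd x u)). hexpand.
    rewrite ?(hinner_sym _ u x), ?(hinner_sym _ u v) in *. lra. }
  specialize (Hopt _ _ Hrel).
  assert (Hx : x = hopp u).
  { apply eq_of_dist_sq0. apply Rle_antisym; [|apply hinner_pos].
    hexpand. rewrite ?(hinner_sym _ u x) in *. lra. }
  rewrite <- Hx in Hrel. exists x. exact Hrel.
Qed.

End Minty.

Lemma max_rho_monotone_related {X : HilbertSpace} (rho : R) (M : setop X) (a b : X) :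
  max_rho_monotone rho M ->
  (forall y v, M y v -> rho * hinner (hsub a y) (hsub a y) <= hinner (hsub a y) (hsub b v)) ->
  M a b.
Proof.
  intros [Hm Hmax] Hrel.
  apply (Hmax (fun x u => M x u \/ (x = a /\ u = b))).
  - intros x u y v [H1 | [-> ->]] [H2 | [-> ->]]; rewrite hnorm_sq.
    + rewrite <- hnorm_sq. apply Hm; auto.
    + specialize (Hrel _ _ H1). hexpand. lra.
    + apply Rle_ge, Hrel; auto.
    + hexpand. lra.
  - intros; left; auto.
  - right; auto.
Qed.

Lemma resolvent_surjective {X : HilbertSpace} (rho g : R) (M : setop X) :
  max_rho_monotone rho M -> 0 < g -> 0 < 1 + g * rho ->
  forall x, exists y u, M y u /\ x = hadd y (hscal g u).
Proof.
  intros HM Hg Hc x.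
  (* N := {(y, w) | M y (f y w)} is maximally monotone, and w = -y gives x = y + g (f y w) *)
  set (f := fun y w => hadd (hscal (/ g) (hadd (hscal (1 + g * rho) w) x)) (hscal rho y)).
  set (k := / g * (1 + g * rho)).
  assert (Hk : 0 < k) by (apply Rmult_lt_0_compat; [apply Rinv_0_lt_compat|]; lra).
  assert (Hf : forall a y b w, hinner (hsub a y) (hsub (f a b) (f y w)) =
     k * hinner (hsub a y) (hsub b w) + rho * hinner (hsub a y) (hsub a y)).
  { intros. unfold f, k. hexpand. ring. }
  destruct (minty_zero (fun y w => M y (f y w))) as [y Hy].
  - intros y1 w1 y2 w2 H1 H2. assert (Mo := proj1 HM _ _ _ _ H1 H2).
    rewrite hnorm_sq, Hf in Mo. apply Rmult_le_reg_l with k; lra.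
  - intros a b Hrel. apply (max_rho_monotone_related rho M _ _ HM). intros y v Hyv.
    set (w := hscal (/ (1 + g * rho)) (hsub (hscal g (hsub v (hscal rho y))) x)).
    assert (fw : f y w = v) by (unfold f, w; vext; field; lra).
    specialize (Hrel y w ltac:(rewrite fw; exact Hyv)). rewrite <- fw, Hf.
    assert (0 <= k * hinner (hsub a y) (hsub b w)) by (apply Rmult_le_pos; lra). lra.
  - exists y, (f y (hopp y)). split; [exact Hy|]. unfold f. vext. field. lra.
Qed.

Lemma resolvent_injective {X : HilbertSpace} (rho g : R) (M : setop X) (y1 u1 y2 u2 : X) :
  rho_monotone rho M -> 0 < g -> 0 < 1 + g * rho -> M y1 u1 -> M y2 u2 ->
  hadd y1 (hscal g u1) = hadd y2 (hscal g u2) -> y1 = y2.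
Proof.
  intros HM Hg Hc H1 H2 E.
  assert (Mo := HM _ _ _ _ H1 H2). rewrite hnorm_sq in Mo.
  set (D := hinner (hsub y1 y2) (hsub y1 y2)) in *.
  set (I := hinner (hsub y1 y2) (hsub u1 u2)) in *.
  assert (HgI : g * I = - D).
  { assert (Ed : hinner (hsub y1 y2) (hadd y1 (hscal g u1)) = hinner (hsub y1 y2) (hadd y2 (hscal g u2)))
      by (rewrite E; reflexivity).
    unfold I, D. hexpand. lra. }
  assert (Hpos : 0 <= g * (I - rho * D)) by (apply Rmult_le_pos; lra).
  apply eq_of_dist_sq0. fold D. apply Rle_antisym; [|apply hinner_pos]. nra.
Qed.

Lemma weighted_sq_lower_bound {X : HilbertSpace} (P Q : X) (a b : R) : 0 < a + b ->
  a * b / (a + b) * hinner (hsub P Q) (hsub P Q) <= a * hinner P P + b * hinner Q Q.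
Proof.
  intro Hab.
  assert (Id : (a + b) * (a * hinner P P + b * hinner Q Q) - a * b * hinner (hsub P Q) (hsub P Q)
             = hinner (hadd (hscal a P) (hscal b Q)) (hadd (hscal a P) (hscal b Q))).
  { hexpand. rewrite (hinner_sym _ Q P). ring. }
  assert (Hpos := hinner_pos _ (hadd (hscal a P) (hscal b Q))).
  apply Rmult_le_reg_l with (a + b); [lra|].
  replace ((a + b) * (a * b / (a + b) * hinner (hsub P Q) (hsub P Q)))
    with (a * b * hinner (hsub P Q) (hsub P Q)) by (field; lra).
  lra.
Qed.

Lemma douglas_rachford_quadratic_bound {X : HilbertSpace} (d P Q : X) (a b : R) : 0 < a + b ->
  a * hinner P P <= hinner P (hsub d P) ->
  b * hinner Q Q <= hinner Q (hsub (hsub (hscal 2 P) d) Q) ->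
  (1 + a * b / (a + b)) * hinner (hsub P Q) (hsub P Q) <= hinner d (hsub P Q).
Proof.
  intros Hab HP HQ. assert (W := weighted_sq_lower_bound P Q a b Hab).
  set (k := a * b / (a + b)) in *.
  hexpand. rewrite ?(hinner_sym _ Q P), ?(hinner_sym _ P d), ?(hinner_sym _ Q d) in *. lra.
Qed.

Lemma averaged_of_cocoercive {X : HilbertSpace} (T : setop X) (f : X -> X) (c : R) :
  1/2 < c -> (forall x w, T x w <-> w = f x) ->
  (forall x y, c * hinner (hsub (hsub x (f x)) (hsub y (f y))) (hsub (hsub x (f x)) (hsub y (f y)))
               <= hinner (hsub x y) (hsub (hsub x (f x)) (hsub y (f y)))) ->
  averaged (/ (2 * c)) T.
Proof.
  intros Hc HT Hco. split.
  - split; [apply Rinv_0_lt_compat; lra|].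
    rewrite <- Rinv_1. apply Rinv_1_lt_contravar; lra.
  - exists (fun x => hsub x (hscal (2 * c) (hsub x (f x)))). split.
    + intros x y. specialize (Hco x y).
      set (e := hsub (hsub x (f x)) (hsub y (f y))) in *.
      assert (E : hsub (hsub x (hscal (2 * c) (hsub x (f x)))) (hsub y (hscal (2 * c) (hsub y (f y))))
                  = hsub (hsub x y) (hscal (2 * c) e)) by (unfold e; vext; ring).
      rewrite E. clearbody e. set (d := hsub x y) in *. clearbody d.
      unfold hnorm. apply sqrt_le_1_alt.
      hexpand. rewrite (hinner_sym _ e d). nra.
    + intros x w. rewrite HT. split; intros ->; vext; field; lra.
Qed.

Section DouglasRachford.
Context {X : HilbertSpace} (A B : setop X) (g rA rB : R).
Hypotheses (HA : max_rho_monotone rA A) (HB : max_rho_monotone rB B).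
Hypotheses (Hg : 0 < g) (HgA : 0 < 1 + g * rA) (HgB : 0 < 1 + g * rB).

Lemma DR_op_elim x w : DR_op g A B x w ->
  exists p a q b, A p a /\ B q b /\ x = hadd p (hscal g a) /\
    hsub (hscal 2 p) x = hadd q (hscal g b) /\ w = hsub x (hsub p q).
Proof.
  intros [z [[r [[p [[ga [[a [Ha ->]] Ex]] ->]] [q [[gb [[b [Hb ->]] Er]] ->]]]] ->]].
  exists p, a, q, b. repeat split; auto.
  subst x. vext. field.
Qed.

Lemma DR_op_intro p a q b x : A p a -> B q b -> x = hadd p (hscal g a) ->
  hsub (hscal 2 p) x = hadd q (hscal g b) -> DR_op g A B x (hsub x (hsub p q)).
Proof.
  intros Ha Hb Ex Er. exists (hsub (hscal 2 q) (hsub (hscal 2 p) x)). split.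
  - exists (hsub (hscal 2 p) x). split.
    + exists p. split; [|reflexivity]. exists (hscal g a). split; [exists a; auto | exact Ex].
    + exists q. split; [|reflexivity]. exists (hscal g b). split; [exists b; auto | exact Er].
  - subst x. vext. field.
Qed.

Lemma DR_op_total x : exists w, DR_op g A B x w.
Proof.
  destruct (resolvent_surjective rA g A HA Hg HgA x) as [p [a [Ha Ex]]].
  destruct (resolvent_surjective rB g B HB Hg HgB (hsub (hscal 2 p) x)) as [q [b [Hb Er]]].
  eexists. exact (DR_op_intro p a q b x Ha Hb Ex Er).
Qed.

Lemma DR_op_unique x w1 w2 : DR_op g A B x w1 -> DR_op g A B x w2 -> w1 = w2.
Proof.
  intros H1 H2.
  destruct (DR_op_elim _ _ H1) as (p1 & a1 & q1 & b1 & Ha1 & Hb1 & Ex1 & Er1 & ->).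
  destruct (DR_op_elim _ _ H2) as (p2 & a2 & q2 & b2 & Ha2 & Hb2 & Ex2 & Er2 & ->).
  assert (Ep : p1 = p2).
  { apply (resolvent_injective rA g A p1 a1 p2 a2 (proj1 HA)); auto. congruence. }
  subst p2.
  assert (Eq : q1 = q2).
  { apply (resolvent_injective rB g B q1 b1 q2 b2 (proj1 HB)); auto. congruence. }
  subst q2. reflexivity.
Qed.

Lemma DR_op_cocoercive x1 w1 x2 w2 : 0 < rA + rB ->
  DR_op g A B x1 w1 -> DR_op g A B x2 w2 ->
  (1 + g * rA * rB / (rA + rB)) * hinner (hsub (hsub x1 w1) (hsub x2 w2)) (hsub (hsub x1 w1) (hsub x2 w2))
    <= hinner (hsub x1 x2) (hsub (hsub x1 w1) (hsub x2 w2)).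
Proof.
  intros Hsum H1 H2.
  destruct (DR_op_elim _ _ H1) as (p1 & a1 & q1 & b1 & Ha1 & Hb1 & Ex1 & Er1 & ->).
  destruct (DR_op_elim _ _ H2) as (p2 & a2 & q2 & b2 & Ha2 & Hb2 & Ex2 & Er2 & ->).
  assert (MA := proj1 HA _ _ _ _ Ha1 Ha2). assert (MB := proj1 HB _ _ _ _ Hb1 Hb2).
  rewrite hnorm_sq in MA, MB.
  assert (EB : hsub (hsub (hscal 2 (hsub p1 p2)) (hsub x1 x2)) (hsub q1 q2) = hscal g (hsub b1 b2)).
  { transitivity (hsub (hsub (hsub (hscal 2 p1) x1) (hsub (hscal 2 p2) x2)) (hsub q1 q2));
      [vext; ring|].
    rewrite Er1, Er2. vext. ring. }
  assert (EA : hsub (hsub x1 x2) (hsub p1 p2) = hscal g (hsub a1 a2)) by (subst x1 x2; vext; ring).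
  assert (E : hsub (hsub x1 (hsub x1 (hsub p1 q1))) (hsub x2 (hsub x2 (hsub p2 q2)))
              = hsub (hsub p1 p2) (hsub q1 q2)) by (vext; ring).
  rewrite E.
  replace (g * rA * rB / (rA + rB)) with (g * rA * (g * rB) / (g * rA + g * rB))
    by (field; split; nra).
  apply douglas_rachford_quadratic_bound; [nra| |].
  - rewrite EA, hinner_scal_r, Rmult_assoc. apply Rmult_le_compat_l; lra.
  - rewrite EB, hinner_scal_r, Rmult_assoc. apply Rmult_le_compat_l; lra.
Qed.

End DouglasRachford.

Theorem DR_op_averaged {X : HilbertSpace} (A B : setop X) (rA rB g : R) :
  max_rho_monotone rA A -> max_rho_monotone rB B ->
  0 < g -> 0 < 1 + g * rA -> 0 < 1 + g * rB -> 0 < rA + rB ->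
  1/2 < 1 + g * rA * rB / (rA + rB) ->
  (forall x, exists! w, DR_op g A B x w) /\
  averaged (/ (2 * (1 + g * rA * rB / (rA + rB)))) (DR_op g A B).
Proof.
  intros HA HB Hg HgA HgB Hsum Hc.
  destruct (choice _ (DR_op_total A B g rA rB HA HB Hg HgA HgB)) as [f Hf].
  assert (HT : forall x w, DR_op g A B x w <-> w = f x).
  { intros x w. split; [intro Hw | intros ->; auto].
    apply (DR_op_unique A B g rA rB HA HB Hg HgA HgB x); auto. }
  split.
  - intro x. exists (f x). split; [auto|]. intros w Hw. symmetry. apply HT, Hw.
  - apply averaged_of_cocoercive with f; auto. intros x y.
    apply (DR_op_cocoercive A B g rA rB HA HB); auto.
Qed.

Lemma step_size_bounds (mu omega gamma : R) : 0 <= omega -> omega < mu -> 0 < gamma ->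
  (0 < omega -> gamma < (mu - omega) / (2 * mu * omega)) ->
  2 * (gamma * mu * omega) < mu - omega /\ 1/2 < 1 - gamma * mu * omega / (mu - omega).
Proof.
  intros Hom Hmu Hg Hg1.
  assert (Hsmall : 2 * (gamma * mu * omega) < mu - omega).
  { destruct Hom as [Hpos | <-]; [|lra].
    specialize (Hg1 Hpos).
    apply Rmult_lt_compat_r with (r := 2 * mu * omega) in Hg1; [|nra].
    replace ((mu - omega) / (2 * mu * omega) * (2 * mu * omega)) with (mu - omega)
      in Hg1 by (field; nra). lra. }
  split; [exact Hsmall|].
  enough (gamma * mu * omega / (mu - omega) < 1/2) by lra.
  apply Rmult_lt_reg_r with (mu - omega); [lra|].
  replace (gamma * mu * omega / (mu - omega) * (mu - omega)) with (gamma * mu * omega)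
    by (field; lra). lra.
Qed.

Theorem mainTheorem12 (X : HilbertSpace) (A B : setop X) (mu omega gamma : R)
  (Hom : 0 <= omega) (Hmu : omega < mu)
  (Hg0 : 0 < gamma) (Hg1 : 0 < omega -> gamma < (mu - omega) / (2 * mu * omega))
  (HAB : (max_rho_monotone (- omega) A /\ max_rho_monotone mu B) \/
         (max_rho_monotone mu A /\ max_rho_monotone (- omega) B)) :
  let T := DR_op gamma A B in
  let alpha := (mu - omega) / (2 * (mu - omega - gamma * mu * omega)) in
  (forall x : X, exists! w : X, T x w) /\
  0 < alpha < 1 /\
  averaged alpha T.
Proof.
  intros T alpha.
  destruct (step_size_bounds mu omega gamma Hom Hmu Hg0 Hg1) as [Hsmall Hc].
  set (c := 1 - gamma * mu * omega / (mu - omega)) in Hc.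
  assert (Hcoef : forall rA rB, rA + rB = mu - omega -> rA * rB = - (mu * omega) ->
                  1 + gamma * rA * rB / (rA + rB) = c).
  { intros rA rB Hs Hp. unfold c. rewrite Rmult_assoc, Hp, Hs. field. lra. }
  assert (Halpha : alpha = / (2 * c)) by (unfold alpha, c; field; lra).
  assert (Hmo : 0 < 1 + gamma * - omega) by nra.
  assert (Hmu' : 0 < 1 + gamma * mu) by nra.
  assert (Hmain : (forall x, exists! w, T x w) /\ averaged alpha T).
  { rewrite Halpha. unfold T.
    destruct HAB as [[HA HB] | [HA HB]].
    - rewrite <- (Hcoef (- omega) mu) by ring. apply DR_op_averaged; auto; try lra.
      rewrite Hcoef by ring. exact Hc.
    - rewrite <- (Hcoef mu (- omega)) by ring. apply DR_op_averaged; auto; try lra.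
      rewrite Hcoef by ring. exact Hc. }
  destruct Hmain as [Hfun Havg]. split; [exact Hfun|]. split; [apply Havg | exact Havg].
Qed.
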